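(* Let $f:\mathrm{I}\to\mathbb{R}$ be a convex function on an interval $\mathrm{I}\subseteq\mathbb{R}$, let $\Gamma\subseteq\mathcal{M}_b(\mathcal{H})$, and let $\P\in\mathcal{P}(\mathcal{H})$ be a fixed distribution (not depending on the sample). Let $\delta\in[0,1]$ and, for every sample $\mathcal{S}\in\mathcal{Z}^m$, let $\phi_{\mathcal{S}}\in\Gamma$. Then with probability at least $1-\delta$ over $\mathcal{S}\sim\mathcal{D}^m$, for all $\rho\in\mathcal{P}(\mathcal{H})$, \[ \mathbb{E}_{h\sim\rho}\phi_{\mathcal{S}}(h)\le D^{\Gamma}_{f}(\rho\|\P)+\ln\frac{1}{\delta}+\ln\Big[\mathbb{E}_{\mathcal{S}\sim\mathcal{D}^m}\exp\big(\Lambda^{\P}_{f}(\phi_{\mathcal{S}})\big)\Big]. \]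
   Context: $\mathcal{H}$ is a hypothesis space, $\mathcal{Z}$ a data space, $\mathcal{D}$ an unknown distribution on $\mathcal{Z}$, and $\mathcal{S}=\{z_1,\dots,z_m\}\sim\mathcal{D}^m$ an i.i.d. sample. $\mathcal{P}(\mathcal{H})$ is the set of probability distributions on $\mathcal{H}$ and $\mathcal{M}_b(\mathcal{H})$ the set of bounded measurable functions $\mathcal{H}\to\mathbb{R}$. $f^*(y)=\sup_{x\in\mathrm{I}}\{xy-f(x)\}$ is the Legendre transform of $f$. For $\varphi\in\mathcal{M}_b(\mathcal{H})$, $\Lambda^{\P}_{f}(\varphi):=\inf_{c\in\mathbb{R}}\{c+\mathbb{E}_{h\sim\P}f^*(\varphi(h)-c)\}$. The $(f,\Gamma)$-divergence is $D^{\Gamma}_f(\rho\|\P):=\sup_{\varphi\in\Gamma}\{\mathbb{E}_{h\sim\rho}\varphi(h)-\Lambda^{\P}_f(\varphi)\}$. *)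

From HB Require Import structures.
From mathcomp Require Import all_boot all_order all_algebra.
From mathcomp Require Import all_classical all_reals all_analysis measurable_realfun.
Set Implicit Arguments. Unset Strict Implicit. Unset Printing Implicit Defensive.
Import Order.TTheory GRing.Theory Num.Theory.
Import numFieldNormedType.Exports.
Local Open Scope classical_set_scope.
Local Open Scope ring_scope.

Definition Mb {d} {H : measurableType d} {R : realType} : set (H -> R) :=
  [set phi : H -> R | measurable_fun setT phi /\ exists M : R, forall h, `|phi h| <= M].

Definition legendre {R : realType} (I : interval R) (f : R -> R) (y : R) : \bar R :=
  ereal_sup [set ((x * y - f x)%R)%:E | x in [set` I]].

Local Open Scope ereal_scope.

Definition LambdaF {d} {H : measurableType d} {R : realType}
    (P : probability H R) (I : interval R) (f : R -> R) (phi : H -> R) : \bar R :=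
  ereal_inf [set c%:E + \int[P]_h legendre I f (phi h - c)%R | c in [set: R]].

Definition fGammaDiv {d} {H : measurableType d} {R : realType}
    (I : interval R) (f : R -> R) (Gamma : set (H -> R))
    (rho P : probability H R) : \bar R :=
  ereal_sup [set \int[rho]_h (phi h)%:E - LambdaF P I f phi | phi in Gamma].

(* mu is the m-fold product D^m of D on m-tuples: it agrees with the product
   of D on all measurable rectangles (this determines it uniquely) *)
Definition is_product_prob {d} {Z : measurableType d} {R : realType} (m : nat)
    (D : probability Z R) (mu : probability (m.-tuple Z) R) : Prop :=
  forall A : 'I_m -> set Z, (forall i, measurable (A i)) ->
    mu [set S : m.-tuple Z | forall i, A i (tnth S i)] = \prod_(i < m) D (A i).

From HB Require Import structures.
From mathcomp Require Import all_boot all_order all_algebra.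
From mathcomp Require Import all_classical all_reals all_analysis measurable_realfun.
Import Order.TTheory GRing.Theory Num.Theory.
Import numFieldNormedType.Exports.
Local Open Scope classical_set_scope.
Local Open Scope ring_scope.
Local Open Scope ereal_scope.
Import DualAddTheory.

(* Write L(S) for Lambda^P_f(phi_S) and E for the D^m-mean of exp L.  For every
   rho, phi_S is one of the competitors in the supremum defining D^Gamma_f(rho||P),
   so E_rho phi_S <= D^Gamma_f(rho||P) + L(S).  Markov's inequality for the
   nonnegative variable exp L bounds the probability of exp L(S) > E/delta by
   delta, i.e. L(S) <= ln(1/delta) + ln E with probability at least 1 - delta. *)

Lemma measurable_expeR (R : realType) : measurable_fun [set: \bar R] (@expeR R).
Proof.
rewrite (_ : expeR = fun x => if x \is a fin_num then (expR (fine x))%:E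
                              else maxe x 0); last first.
  by apply: funext => -[r| |] /=; rewrite ?maxye ?maxNye.
apply: measurable_fun_ifT => //=.
- by apply: (measurable_fun_bool true); exact/emeasurable_fin_num.
- exact/measurable_EFinP/measurableT_comp.
- exact: measurable_maxe.
Qed.

Section markov_integral_tail.
Context d (T : measurableType d) (R : realType).
Variables (mu : {measure set T -> \bar R}) (h : T -> \bar R).
Hypotheses (mh : measurable_fun setT h) (h_ge0 : forall x, 0 <= h x).

Lemma ge0_integral_abse : \int[mu]_y `|h y| = \int[mu]_y h y.
Proof. by apply: eq_integral => y _; rewrite gee0_abs. Qed.

Lemma ge0_integral_eq0_measure_gt0 : \int[mu]_y h y = 0 -> mu [set x | 0 < h x] = 0.
Proof.
rewrite -ge0_integral_abse => /(ae_eq_integral_abs mu measurableT mh) [N [mN N0 hN]].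
apply/eqP; rewrite -measure_le0 -[X in _ <= X]N0 le_measure ?inE //.
- by rewrite -[X in measurable X]setTI; exact: emeasurable_fun_o_infty.
- by move=> x /= h_gt0; apply: hN => /(_ I) h0; move: h_gt0; rewrite h0 ltxx.
Qed.

Lemma markov_integral_tail (delta : R) : (0 < delta)%R ->
  mu [set x | \int[mu]_y h y * delta^-1%:E < h x] <= delta%:E.
Proof.
move=> delta_gt0; set E := \int[mu]_y h y.
have E_ge0 : 0 <= E by exact: integral_ge0.
have [->|E_neqy] := eqVneq E +oo.
  suff -> : [set x | +oo * delta^-1%:E < h x] = set0 by rewrite measure0 lee_fin ltW.
  by apply/seteqP; split => x //=; rewrite gt0_mulye ?lte_fin ?invr_gt0 // ltNge leey.
have E_fin : E \is a fin_num by rewrite ge0_fin_numE // ltey.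
have [E0|E_neq0] := eqVneq E 0.
  by rewrite E0 mul0e ge0_integral_eq0_measure_gt0 // lee_fin ltW.
rewrite -(fineK E_fin); set e := fine E.
have e_gt0 : (0 < e)%R by rewrite fine_gt0 // lt0e E_neq0 E_ge0 ltey.
pose c := (e / delta)%R; have c_gt0 : (0 < c)%R by exact: divr_gt0.
have markov := le_integral_abse mu measurableT mh c_gt0.
rewrite ge0_integral_abse -/E -(fineK E_fin) -/e in markov.
rewrite (_ : delta%:E = c^-1%:E * e%:E); last by rewrite -EFinM invf_div divfK ?gt_eqF.
rewrite lee_pdivlMl //; apply: le_trans markov.
apply: lee_wpmul2l; first by rewrite lee_fin ltW.
apply: le_measure; rewrite ?inE //.
- by rewrite -[X in measurable X]setTI; exact: emeasurable_fun_o_infty.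
- by apply: emeasurable_fun_c_infty => //; exact: measurableT_comp.
- by move=> x /= c_lt; rewrite gee0_abs // ltW // -EFinM.
Qed.
End markov_integral_tail.

Lemma expeR_lne_dadd (R : realType) (delta : R) (x : \bar R) : (0 < delta)%R -> 0 <= x ->
  expeR (- lne delta%:E + lne x)%dE = x * delta^-1%:E.
Proof.
move=> delta_gt0 x_ge0.
rewrite lne_EFin // dual_addeE_def ?fin_num_adde_defr // expeRD muleC.
rewrite lneK ?in_itv /= ?x_ge0 ?leey //.
by rewrite expRN lnK.
Qed.

Lemma lne_integral_expeR_tail d (T : measurableType d) (R : realType)
    (mu : {measure set T -> \bar R}) (g : T -> \bar R) (delta : R) :
  measurable_fun setT g -> (0 <= delta)%R ->
  mu [set x | (- lne delta%:E + lne (\int[mu]_y expeR (g y)))%dE < g x] <= delta%:E.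
Proof.
move=> mg; rewrite le_eqVlt => /predU1P[<-|delta_gt0].
  (* lne 0 = -oo, so for delta = 0 the threshold is +oo *)
  rewrite le0_lneNy // daddye (_ : [set x | +oo < g x] = set0) ?measure0 //.
  by apply/seteqP; split => x //; rewrite /= ltNge leey.
have E_ge0 : 0 <= \int[mu]_y expeR (g y) by apply: integral_ge0 => y _; exact: expeR_ge0.
under eq_set do rewrite -lte_expeR expeR_lne_dadd //.
apply: markov_integral_tail => //; last by move=> y; exact: expeR_ge0.
exact: measurableT_comp (measurable_expeR R) mg.
Qed.

Lemma probability_le_lne_integral_expeR d (T : measurableType d) (R : realType)
    (P : probability T R) (g : T -> \bar R) (delta : R) :
  measurable_fun setT g -> (0 <= delta)%R ->
  (1 - delta)%:E <= P [set x | g x <= (- lne delta%:E + lne (\int[P]_y expeR (g y)))%dE].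
Proof.
move=> mg delta_ge0; set B := (X in [set x | g x <= X]).
rewrite (_ : [set x | g x <= B] = ~` [set x | B < g x]); last first.
  by apply/seteqP; split => x /=; rewrite ltNge; [move=> -> | move/negP; rewrite negbK].
rewrite probability_setC; last first.
  by rewrite -[X in measurable X]setTI; exact: emeasurable_fun_o_infty.
by rewrite EFinB leeB //; exact: lne_integral_expeR_tail.
Qed.

Lemma le_dadd_of_sub_le (R : realType) (a l b c : \bar R) :
  a \is a fin_num -> a - l <= b -> l <= c -> a <= (b + c)%dE.
Proof.
move=> a_fin; rewrite -dual_addeE_def ?fin_num_adde_defr // lee_dsubel_addr // => ab lc.
exact: le_trans ab (lee_dD2l _ lc).
Qed.

Lemma Mb_integrable d (T : measurableType d) (R : realType)
    (mu : {finite_measure set T -> \bar R}) (phi : T -> R) :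
  Mb phi -> mu.-integrable setT (EFin \o phi).
Proof.
move=> [mphi [M phiM]]; apply: measurable_bounded_integrable => //.
  by rewrite ltey_eq fin_num_measure.
exists M; split; first exact: num_real.
by move=> x Mx h _; exact: le_trans (phiM h) (ltW Mx).
Qed.

Lemma le_fGammaDiv d (H : measurableType d) (R : realType) (I : interval R)
    (f : R -> R) (Gamma : set (H -> R)) (rho P : probability H R) (phi : H -> R) :
  Gamma phi -> \int[rho]_h (phi h)%:E - LambdaF P I f phi <= fGammaDiv I f Gamma rho P.
Proof. by move=> Gphi; apply: ereal_sup_ubound; exists phi. Qed.

Theorem theorem3p1 (R : realType)
    (dH : measure_display) (H : measurableType dH)
    (dZ : measure_display) (Z : measurableType dZ)
    (I : interval R) (f : R -> R)
    (hf : convex_function (E := R^o) [set` I] f)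
    (Gamma : set (H -> R)) (hGamma : Gamma `<=` Mb)
    (P : probability H R)
    (m : nat) (D : probability Z R) (Dm : probability (m.-tuple Z) R)
    (hDm : is_product_prob D Dm)
    (delta : R) (hdelta0 : (0 <= delta)%R) (hdelta1 : (delta <= 1)%R)
    (phi : m.-tuple Z -> H -> R) (hphi : forall S, Gamma (phi S))
    (hmeas : measurable_fun setT
               ((fun S => LambdaF P I f (phi S)) : m.-tuple Z -> \bar R)) :
  exists A : set (m.-tuple Z),
    [/\ measurable A, ((1 - delta)%R)%:E <= Dm A &
      forall S, A S -> forall rho : probability H R,
        \int[rho]_h (phi S h)%:E <=
          dual_adde (dual_adde (fGammaDiv I f Gamma rho P) (- lne delta%:E))
            (lne (\int[Dm]_S' expeR (LambdaF P I f (phi S'))))].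
Proof.
pose L S := LambdaF P I f (phi S).
exists [set S | L S <= (- lne delta%:E + lne (\int[Dm]_S' expeR (L S')))%dE]; split.
- by rewrite -[X in measurable X]setTI; exact: emeasurable_fun_infty_c.
- exact: probability_le_lne_integral_expeR.
- move=> S LS rho.
  (* daddeA is stated for the addition of \bar^d R, which unfolds to dual_adde *)
  rewrite -[dual_adde (dual_adde _ _) _]/(_ + _ + _)%dE -daddeA.
  apply: le_dadd_of_sub_le LS.
  + exact/integrable_fin_num/Mb_integrable/hGamma/hphi.
  + exact: le_fGammaDiv.
Qed.
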